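(* Let $n\geq 2$ and let $N$ be any integer. The matrix ring $\mathrm{Mat}_n(\mathbb{Z}/N\mathbb{Z})$ has the presentation (as a unital associative ring) $$\mathrm{Mat}_n(\mathbb{Z}/N\mathbb{Z})\cong\langle x,y \mid x^n=0,\ y^n=0,\ xy+(N+1)y^{n-1}x^{n-1}=1\rangle.$$
   Context: All rings are associative with unit, and presentations are taken in the category of unital associative rings: the right-hand side is the quotient of the free ring $\mathbb{Z}\langle x,y\rangle$ by the two-sided ideal generated by $x^n$, $y^n$ and $xy+(N+1)y^{n-1}x^{n-1}-1$. *)

From HB Require Import structures.
From mathcomp Require Import all_boot all_order all_algebra.
Set Implicit Arguments. Unset Strict Implicit. Unset Printing Implicit Defensive.
Import Order.TTheory GRing.Theory Num.Theory.
Local Open Scope ring_scope.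

Definition zero_ring_carrier := unit.
HB.instance Definition _ := Choice.on zero_ring_carrier.
Lemma zr_assoc : associative (fun _ _ : zero_ring_carrier => tt). Proof. by []. Qed.
Lemma zr_comm : commutative (fun _ _ : zero_ring_carrier => tt). Proof. by []. Qed.
Lemma zr_lid : left_id tt (fun _ _ : zero_ring_carrier => tt). Proof. by case. Qed.
Lemma zr_rid : right_id tt (fun _ _ : zero_ring_carrier => tt). Proof. by case. Qed.
Lemma zr_linv : left_inverse tt (fun _ : zero_ring_carrier => tt) (fun _ _ => tt). Proof. by []. Qed.
Lemma zr_ldist : left_distributive (fun _ _ : zero_ring_carrier => tt) (fun _ _ => tt). Proof. by []. Qed.
Lemma zr_rdist : right_distributive (fun _ _ : zero_ring_carrier => tt) (fun _ _ => tt). Proof. by []. Qed.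
HB.instance Definition _ := GRing.isPzRing.Build zero_ring_carrier
  zr_assoc zr_comm zr_lid zr_linv zr_assoc zr_lid zr_rid zr_ldist zr_rdist.

Definition ZmodN (N : int) : pzRingType :=
  match `|N|%N with
  | 0%N => int
  | 1%N => zero_ring_carrier
  | m.+2 => 'Z_m.+2
  end.

Definition pres_rel (R : pzRingType) (n : nat) (N : int) (x y : R) : Prop :=
  [/\ x ^+ n = 0, y ^+ n = 0 &
      x * y + (N + 1)%:~R * (y ^+ n.-1 * x ^+ n.-1) = 1].

(* In a ring R with x^n = y^n = 0 and xy + (N+1) y^(n-1) x^(n-1) = 1, put
   q := 1 - xy.  Then q x = 0 = y q, so xyx = x and yxy = y, and an induction
   on exponents gives q y^j x^i q = [i = j] q for i, j < n.  Taking
   i = j = n-1 yields q = y^(n-1) x^(n-1), so the last relation reads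
   (N+1) q = q, i.e. N q = 0.  Hence the x^i q y^j are a complete system of
   n x n matrix units annihilated by N, and A |-> sum A_ij x^i q y^j is a ring
   morphism Mat_n(Z/NZ) -> R.  In Mat_n(Z/NZ) the shift matrices X, Y satisfy
   the relations with 1 - XY = e_00, and X^i (1 - XY) Y^j = e_ij, so X and Y
   generate the matrix ring and the morphism is unique. *)

From HB Require Import structures.
From mathcomp Require Import all_boot all_order all_algebra.
From mathcomp Require Import zify.
Set Implicit Arguments.
Unset Strict Implicit.
Unset Printing Implicit Defensive.
Import GRing.Theory.
Local Open Scope ring_scope.

Section RelationUnits.
Variables (R : pzRingType) (n : nat) (N : int) (x y : R).
Hypotheses (n_gt1 : (1 < n)%N) (Hrel : pres_rel n N x y).

Let xn0 : x ^+ n = 0. Proof. by case: Hrel. Qed.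
Let yn0 : y ^+ n = 0. Proof. by case: Hrel. Qed.
Let nE : n.-1.+1 = n. Proof. exact: prednK (ltnW n_gt1). Qed.

Let c : R := (N + 1)%:~R.
Let e := y ^+ n.-1 * x ^+ n.-1.
Let q := 1 - x * y.
Let r := 1 - y * x.

Let ex0 : e * x = 0. Proof. by rewrite -mulrA -exprSr nE xn0 mulr0. Qed.
Let ye0 : y * e = 0. Proof. by rewrite mulrA -exprS nE yn0 mul0r. Qed.

Let q_ce : q = c * e.
Proof. by case: Hrel => _ _ rel; rewrite /q -rel addrC addKr. Qed.

Let qx0 : q * x = 0. Proof. by rewrite q_ce -mulrA ex0 mulr0. Qed.
Let yq0 : y * q = 0. Proof. by rewrite q_ce /c mulrA commr_int -mulrA ye0 mulr0. Qed.

Let xr0 : x * r = 0.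
Proof. by rewrite mulrBr mulr1 mulrA -[X in X - _]mul1r -mulrBl qx0. Qed.

Let yxE : y * x = 1 - r. Proof. by rewrite /r opprB addrC subrK. Qed.
Let xyE : x * y = 1 - q. Proof. by rewrite /q opprB addrC subrK. Qed.

Let ypow0 a : (n <= a)%N -> y ^+ a = 0.
Proof. by move=> le_na; rewrite -(subnK le_na) exprD yn0 mulr0. Qed.

Let xpow_ypow_r m a : (a < m)%N -> x ^+ m * y ^+ a * r = 0.
Proof.
elim: a m => [|a IHa] [|m] //= lt_am.
  by rewrite mulr1 exprSr -mulrA xr0 mulr0.
have [le_na|lt_an] := leqP n a.+1; first by rewrite ypow0 // mulr0 mul0r.
rewrite exprSr exprS mulrA -(mulrA _ x) xyE (mulrBr (x ^+ m)) mulr1.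
rewrite !(mulrBl _ (x ^+ m)) mulrBl IHa // sub0r.
have := IHa n.-1; rewrite -ltnS nE -!mulrA => /(_ lt_an) xyr0.
by rewrite q_ce /e -!mulrA xyr0 !mulr0 oppr0.
Qed.

Let q_ypow_r a : (a < n.-1)%N -> q * y ^+ a * r = 0.
Proof.
move=> lt_an; have := xpow_ypow_r lt_an; rewrite -!mulrA => xyr0.
by rewrite q_ce /e -!mulrA xyr0 !mulr0.
Qed.

Let qq : q * q = q.
Proof. by rewrite {2}/q mulrBr mulr1 mulrA qx0 mul0r subr0. Qed.

Let q_ypow_xpow_q i j : (j < n)%N -> q * y ^+ j * x ^+ i * q = if i == j then q else 0.
Proof.
elim: j i => [|j IHj] [|i] lt_jn /=.
- by rewrite !mulr1 qq.
- by rewrite mulr1 exprS mulrA qx0 !mul0r.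
- by rewrite mulr1 exprSr -!mulrA yq0 !mulr0.
have -> : q * y ^+ j.+1 * x ^+ i.+1 * q = q * y ^+ j * (y * x) * x ^+ i * q.
  by rewrite exprSr exprS !mulrA.
rewrite yxE (mulrBr (q * y ^+ j)) mulr1 !(mulrBl _ (q * y ^+ j)) q_ypow_r.
  by rewrite !mul0r subr0 IHj // ltnW.
by rewrite -ltnS nE.
Qed.

Let q_eq_e : q = e.
Proof.
have qee : q * e = e by rewrite /q mulrBl mul1r -mulrA ye0 mulr0 subr0.
have eqe : e * q = e by rewrite /q mulrBr mulr1 mulrA ex0 mul0r subr0.
have lt_pn : (n.-1 < n)%N by rewrite ltn_predL ltnW.
have := @q_ypow_xpow_q n.-1 n.-1 lt_pn; rewrite eqxx => {1}<-.
by rewrite -(mulrA q) -/e -mulrA eqe qee.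
Qed.

Let Nq0 : N%:~R * q = 0.
Proof.
have := q_ce; rewrite /c intrD mulrDl mul1r -q_eq_e.
by move/eqP; rewrite -subr_eq subrr eq_sym => /eqP.
Qed.

Definition pres_unit (i j : nat) : R := x ^+ i * q * y ^+ j.

Lemma pres_unit_sum : \sum_(i < n) pres_unit i i = 1.
Proof.
rewrite -(big_mkord xpredT (fun i => pres_unit i i)).
rewrite (telescope_sumr_eq (fun i => - (x ^+ i * y ^+ i))) //.
  by rewrite xn0 mul0r oppr0 sub0r opprK mulr1.
by move=> k _; rewrite opprK addrC /pres_unit /q mulrBr mulr1 mulrBl exprSr exprS !mulrA.
Qed.

Lemma pres_rel_char : (N%:~R : R) = 0.
Proof.
rewrite -[LHS]mulr1 -[X in _ * X]pres_unit_sum mulr_sumr big1 // => i _.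
by rewrite /pres_unit !mulrA -(commr_int (x ^+ i)) -(mulrA _ _ q) Nq0 mulr0 mul0r.
Qed.

Lemma pres_unitM i j k l : (j < n)%N || (k < n)%N ->
  pres_unit i j * pres_unit k l = if j == k then pres_unit i l else 0.
Proof.
rewrite /pres_unit; have [lt_jn _ | le_nj /= lt_kn] := ltnP j n.
  have -> : x ^+ i * q * y ^+ j * (x ^+ k * q * y ^+ l) =
            x ^+ i * (q * y ^+ j * x ^+ k * q) * y ^+ l by rewrite !mulrA.
  rewrite q_ypow_xpow_q // eq_sym.
  by case: eqP => _; rewrite ?mulr0 ?mul0r // !mulrA.
rewrite ypow0 // mulr0 mul0r; case: eqP => // eq_jk.
by move: lt_kn; rewrite -eq_jk ltnNge le_nj.
Qed.

Lemma mulx_pres_unit i j : x * pres_unit i j = pres_unit i.+1 j.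
Proof. by rewrite /pres_unit !mulrA -exprS. Qed.

Lemma pres_unit_muly i j : pres_unit i j * y = pres_unit i j.+1.
Proof. by rewrite /pres_unit -!mulrA -exprSr. Qed.

End RelationUnits.

Section ShiftMatrices.
Variables (S : pzRingType) (p : nat).
Local Notation n := p.+1.

Definition shift_mx (k : nat) : 'M[S]_n := \matrix_(i, j) ((i : nat) == j + k)%N%:R.
Definition shiftX : 'M[S]_n := shift_mx 1.
Definition shiftY : 'M[S]_n := (shift_mx 1)^T.

Let ord_eqE (i j : 'I_n) : (i == j) = (i == j :> nat). Proof. by []. Qed.

Lemma sum_mulrn_eq (G : 'I_n -> S) (m : nat) :
  \sum_(l < n) G l *+ ((l : nat) == m) = if (m < n)%N then G (inord m) else 0.
Proof.
have GE (l : 'I_n) : G l = G (inord l) by rewrite inord_val.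
under eq_bigr => l _ do rewrite mulrb GE.
by rewrite -big_mkcond (big_ord1_eq _ (fun l => G (inord l))).
Qed.

Lemma mul_shift_mx a (M : 'M[S]_n) r s :
  (shift_mx a * M) r s = if (a <= r)%N then M (inord (r - a)) s else 0.
Proof.
rewrite -mulmxE mxE; under eq_bigr => l _ do rewrite mxE mulr_natl.
case: leqP => [le_ar | lt_ra]; last first.
  by rewrite big1 // => l _; rewrite (_ : (_ == _) = false) ?mulr0n //; lia.
have eqE (l : 'I_n) : ((r : nat) == l + a)%N = ((l : nat) == r - a)%N by lia.
under eq_bigr => l _ do rewrite eqE.
by rewrite sum_mulrn_eq (_ : (r - a < n)%N) //; have := ltn_ord r; lia.
Qed.

Lemma mul_mx_shift_tr b (M : 'M[S]_n) r s :
  (M * (shift_mx b)^T) r s = if (b <= s)%N then M r (inord (s - b)) else 0.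
Proof.
rewrite -mulmxE mxE; under eq_bigr => l _ do rewrite !mxE mulr_natr.
case: leqP => [le_bs | lt_sb]; last first.
  by rewrite big1 // => l _; rewrite (_ : (_ == _) = false) ?mulr0n //; lia.
have eqE (l : 'I_n) : ((s : nat) == l + b)%N = ((l : nat) == s - b)%N by lia.
under eq_bigr => l _ do rewrite eqE.
by rewrite sum_mulrn_eq (_ : (s - b < n)%N) //; have := ltn_ord s; lia.
Qed.

Lemma mul_tr_shift_mx a (M : 'M[S]_n) r s :
  ((shift_mx a)^T * M) r s = if (r + a < n)%N then M (inord (r + a)) s else 0.
Proof.
rewrite -mulmxE mxE; under eq_bigr => l _ do rewrite !mxE mulr_natl.
exact: sum_mulrn_eq.
Qed.

Lemma shiftX_pow k : shiftX ^+ k = shift_mx k.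
Proof.
elim: k => [|k IHk]; apply/matrixP => r s.
  by rewrite !mxE addn0.
rewrite exprS IHk mul_shift_mx !mxE; case: ifP => h.
  by rewrite inordK; [congr (_%:R); lia | have := ltn_ord r; lia].
by rewrite (_ : (_ == _) = false) //; lia.
Qed.

Lemma shiftY_pow k : shiftY ^+ k = (shift_mx k)^T.
Proof.
elim: k => [|k IHk]; apply/matrixP => r s.
  by rewrite !mxE addn0 eq_sym.
rewrite exprSr IHk mul_mx_shift_tr !mxE; case: ifP => h.
  by rewrite inordK; [congr (_%:R); lia | have := ltn_ord s; lia].
by rewrite (_ : (_ == _) = false) //; lia.
Qed.

Lemma shift_mx_ge k : (n <= k)%N -> shift_mx k = 0.
Proof.
move=> le_nk; apply/matrixP => r s; rewrite !mxE (_ : (_ == _) = false) //.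
by have := ltn_ord r; lia.
Qed.

Lemma shiftX_nilpotent : shiftX ^+ n = 0.
Proof. by rewrite shiftX_pow shift_mx_ge. Qed.

Lemma shiftY_nilpotent : shiftY ^+ n = 0.
Proof. by rewrite shiftY_pow shift_mx_ge ?trmx0. Qed.

Lemma one_sub_shiftXY : 1 - shiftX * shiftY = delta_mx 0 0.
Proof.
apply/matrixP => r s; rewrite mxE [X in _ + X]mxE /shiftX mul_shift_mx !mxE.
rewrite !ord_eqE /=; case: ifP => h.
  rewrite inordK; last by have := ltn_ord r; lia.
  rewrite (_ : (_ && _) = false); last by lia.
  by rewrite subnK // eq_sym subrr.
by rewrite subr0; congr (_%:R); lia.
Qed.

Lemma shiftYX_pow : shiftY ^+ p * shiftX ^+ p = delta_mx 0 0.
Proof.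
rewrite shiftY_pow shiftX_pow; apply/matrixP => r s.
rewrite mul_tr_shift_mx !mxE !ord_eqE /=; case: ifP => h.
  by rewrite inordK //; congr (_%:R); lia.
by rewrite (_ : (_ && _) = false) //; lia.
Qed.

Lemma shift_delta (a b : 'I_n) :
  shiftX ^+ a * delta_mx 0 0 * shiftY ^+ b = delta_mx a b.
Proof.
rewrite shiftX_pow shiftY_pow; apply/matrixP => r s.
have lt_rn := ltn_ord r; have lt_sn := ltn_ord s; have lt_an := ltn_ord a.
rewrite mul_mx_shift_tr; case: ifP => hb; rewrite ?mul_shift_mx; last first.
  by rewrite !mxE !ord_eqE /= (_ : (_ && _) = false) //; lia.
case: ifP => ha; rewrite !mxE !ord_eqE /= ?inordK; try lia.
  by congr (_%:R); lia.
by rewrite (_ : (_ && _) = false) //; lia.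
Qed.

Lemma shift_pres_rel (N : int) : (N%:~R : S) = 0 -> pres_rel n N shiftX shiftY.
Proof.
move=> charS; split; [exact: shiftX_nilpotent | exact: shiftY_nilpotent |] => /=.
have -> : ((N + 1)%:~R : 'M[S]_n) = 1.
  by rewrite intrD -(rmorph_int (@scalar_mx S n)) charS raddf0 add0r.
by rewrite mul1r shiftYX_pow -one_sub_shiftXY addrC subrK.
Qed.

End ShiftMatrices.

Section MatrixUnits.
Variables (S R : pzRingType) (n : nat) (iota : {rmorphism S -> R}).
Variable e : 'I_n -> 'I_n -> R.
Hypothesis eM : forall i j k l, e i j * e k l = if j == k then e i l else 0.
Hypothesis e_sum : \sum_i e i i = 1.
Hypothesis iota_comm : forall s i j, GRing.comm (iota s) (e i j).

Definition mxunit_eval (A : 'M[S]_n) : R := \sum_i \sum_j iota (A i j) * e i j.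

Lemma mxunit_evalE (A : 'M[S]_n) (a : R) :
  (forall i j, e i i * a * e j j = iota (A i j) * e i j) -> mxunit_eval A = a.
Proof.
move=> eAe; have -> : a = (\sum_i e i i) * a * \sum_j e j j.
  by rewrite e_sum mul1r mulr1.
rewrite !mulr_suml; apply: eq_bigr => i _; rewrite mulr_sumr.
by apply: eq_bigr => j _; rewrite eAe.
Qed.

Lemma mxunit_eval_is_nmod_morphism : GRing.nmod_morphism mxunit_eval.
Proof.
split=> [|A B]; rewrite /mxunit_eval.
  by rewrite big1 // => i _; rewrite big1 // => j _; rewrite mxE rmorph0 mul0r.
rewrite -big_split; apply: eq_bigr => i _; rewrite -big_split.
by apply: eq_bigr => j _; rewrite mxE rmorphD mulrDl.
Qed.

Lemma mxunit_eval1 : mxunit_eval 1 = 1.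
Proof.
apply: mxunit_evalE => i j; rewrite mulr1 eM mxE rmorph_nat mulr_natl mulrb eq_sym.
by case: eqP => // ->.
Qed.

Lemma mxunit_termM a b i j k l :
  iota a * e i j * (iota b * e k l) = if j == k then iota (a * b) * e i l else 0.
Proof.
rewrite -mulrA (mulrA (e i j)) -iota_comm -!mulrA (mulrA (iota a)) -rmorphM eM.
by case: eqP; rewrite ?mulr0.
Qed.

Lemma mxunit_evalM A B : mxunit_eval (A * B) = mxunit_eval A * mxunit_eval B.
Proof.
have termM i j : iota (A i j) * e i j * mxunit_eval B =
    \sum_l iota (A i j * B j l) * e i l.
  rewrite /mxunit_eval mulr_sumr (bigD1 j) //= [X in _ + X]big1 ?addr0 => [|k ne_kj].
    by rewrite mulr_sumr; apply: eq_bigr => l _; rewrite mxunit_termM eqxx.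
  by rewrite mulr_sumr big1 // => l _; rewrite mxunit_termM eq_sym (negbTE ne_kj).
rewrite {2}/mxunit_eval mulr_suml; apply: eq_bigr => i _.
rewrite mulr_suml; under [RHS]eq_bigr do rewrite termM.
rewrite exchange_big; apply: eq_bigr => l _.
by rewrite -mulmxE mxE rmorph_sum mulr_suml.
Qed.

Definition mxunit_rmorphism : {rmorphism 'M[S]_n -> R} :=
  HB.pack mxunit_eval
    (GRing.isNmodMorphism.Build _ _ mxunit_eval mxunit_eval_is_nmod_morphism)
    (GRing.isMonoidMorphism.Build _ _ mxunit_eval (mxunit_eval1, mxunit_evalM)).

End MatrixUnits.

Section IntQuotient.
Variables (S R : pzRingType) (N : int) (rep : S -> int).
Hypothesis repK : forall z, (rep z)%:~R = z.
Hypothesis ker_dvd : forall k : int, (k%:~R : S) = 0 -> (N %| k)%Z.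
Hypothesis charR : (N%:~R : R) = 0.

Definition int_lift (z : S) : R := (rep z)%:~R.

Lemma int_lift_intr k : int_lift k%:~R = k%:~R.
Proof.
apply/eqP; rewrite -subr_eq0 -intrB.
have /ker_dvd/dvdzP[m ->] : ((rep k%:~R - k)%:~R : S) = 0 by rewrite intrB repK subrr.
by rewrite intrM charR mulr0.
Qed.

Lemma int_lift_is_nmod_morphism : GRing.nmod_morphism int_lift.
Proof.
split=> [|a b]; first by rewrite -(mulr0z 1) int_lift_intr.
by rewrite -[a]repK -[b]repK -intrD !int_lift_intr intrD.
Qed.

Lemma int_lift_is_monoid_morphism : GRing.monoid_morphism int_lift.
Proof.
split=> [|a b]; first by rewrite -(mulr1z 1) int_lift_intr.
by rewrite -[a]repK -[b]repK -intrM !int_lift_intr intrM.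
Qed.

Definition int_lift_rmorphism : {rmorphism S -> R} :=
  HB.pack int_lift
    (GRing.isNmodMorphism.Build _ _ int_lift int_lift_is_nmod_morphism)
    (GRing.isMonoidMorphism.Build _ _ int_lift int_lift_is_monoid_morphism).

End IntQuotient.

Theorem intr_quotient_mx_presentation (S : pzRingType) (N : int) (rep : S -> int) :
  (forall z, (rep z)%:~R = z) ->
  (forall k : int, (k%:~R : S) = 0 <-> (N %| k)%Z) ->
  forall n, (2 <= n)%N ->
  exists X Y : 'M[S]_n,
    pres_rel n N X Y /\
    forall (R : pzRingType) (a b : R), pres_rel n N a b ->
      exists f : {rmorphism 'M[S]_n -> R},
        [/\ f X = a, f Y = b &
            forall g : {rmorphism 'M[S]_n -> R},
              g X = a -> g Y = b -> forall A, g A = f A].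
Proof.
move=> repK kerE [|p] // n_gt1.
have charS : (N%:~R : S) = 0 by apply/kerE/dvdzz.
exists (shiftX S p), (shiftY S p); split=> [|R a b rel]; first exact: shift_pres_rel.
pose iota := int_lift_rmorphism repK (fun k => (kerE k).1) (pres_rel_char n_gt1 rel).
pose e (i j : 'I_p.+1) := pres_unit a b i j.
have eM i j k l : e i j * e k l = if j == k then e i l else 0.
  by rewrite /e (pres_unitM n_gt1 rel) ?ltn_ord.
have iota_comm s i j : GRing.comm (iota s) (e i j) by exact: esym (commr_int _ _).
have e_sum : \sum_i e i i = 1 := pres_unit_sum rel.
exists (mxunit_rmorphism eM e_sum iota_comm); split=> /=.
- apply: (mxunit_evalE e_sum) => i j.
  rewrite -mulrA mulx_pres_unit /e (pres_unitM n_gt1 rel) ?ltn_ord //.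
  by rewrite !mxE rmorph_nat mulr_natl mulrb addn1 eq_sym.
- apply: (mxunit_evalE e_sum) => i j.
  rewrite pres_unit_muly /e (pres_unitM n_gt1 rel) ?ltn_ord ?orbT //.
  by rewrite !mxE rmorph_nat mulr_natl mulrb addn1 eq_sym.
move=> g gX gY A; rewrite {1}(matrix_sum_delta A) rmorph_sum; apply: eq_bigr => i _.
rewrite rmorph_sum; apply: eq_bigr => j _.
rewrite -shift_delta -one_sub_shiftXY -mul_scalar_mx mulmxE -{1}[A i j]repK.
rewrite (rmorph_int (@scalar_mx S p.+1)) !rmorphM rmorph_int.
by rewrite !rmorphXn rmorphB rmorph1 rmorphM gX gY.
Qed.

Lemma Zp_intr_eq0 m (k : int) : ((k%:~R : 'Z_m.+2) == 0) = (m.+2 %| `|k|)%N.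
Proof.
have natr_eq0 a : ((a%:R : 'Z_m.+2) == 0) = (m.+2 %| a)%N.
  by rewrite -val_eqE /= val_Zp_nat.
case: k => a; first by rewrite -pmulrn natr_eq0.
by rewrite NegzE mulrNz oppr_eq0 -pmulrn natr_eq0.
Qed.

Theorem theorem2 (n : nat) (N : int) : (2 <= n)%N ->
  exists X Y : 'M[ZmodN N]_n,
    pres_rel n N X Y /\
    forall (R : pzRingType) (a b : R), pres_rel n N a b ->
      exists f : {rmorphism 'M[ZmodN N]_n -> R},
        [/\ f X = a, f Y = b &
            forall g : {rmorphism 'M[ZmodN N]_n -> R},
              g X = a -> g Y = b -> forall A, g A = f A].
Proof.
rewrite /ZmodN; case E: `|N|%N => [|[|m]].
- apply: (@intr_quotient_mx_presentation _ N id) => [|k]; first exact: intz.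
  by rewrite intz dvdzE E dvd0n absz_eq0; split=> /eqP.
- apply: (@intr_quotient_mx_presentation _ N (fun _ => 0)) => [[]|k]; first by case: (_%:~R).
  by rewrite dvdzE E dvd1n; split=> //; case: (_%:~R).
- apply: (@intr_quotient_mx_presentation 'Z_m.+2 N (fun z => (val z)%:Z)) => [z|k].
    by rewrite -pmulrn natr_Zp.
  by rewrite dvdzE E -Zp_intr_eq0; split=> /eqP.
Qed.
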